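(* For all terms $M,N$: if $M\sim_{\alpha s} N$ then $M\sim_\alpha N$.
   Context: Let $\mathcal V$ (the variables) be a type with decidable equality, equipped with functions $\mathrm{encode}:\mathcal V\to\mathbb N$ and $\mathrm{decode}:\mathbb N\to\mathcal V$ such that $\mathrm{encode}(\mathrm{decode}\,n)=n$ for all $n$. Let $\mathcal C$ (the constants) be any type. Terms $\Lambda$ are generated by: $c\,k$ ($k\in\mathcal C$), $v\,x$ ($x\in\mathcal V$), $\lambda[x:A]M$, $\Pi[x:A]B$ and $M\cdot N$; in $\lambda[x:A]M$ and $\Pi[x:A]B$ the name $x$ binds in $M$ (resp. $B$) but not in $A$. Terms are raw first-order syntax (not identified up to renaming of bound variables) and $\equiv$ denotes syntactic identity. The list of free variables is $\mathrm{fv}(c\,k)=[\,]$, $\mathrm{fv}(v\,x)=[x]$, $\mathrm{fv}(\lambda[x:A]M)=\mathrm{fv}\,A\mathbin{+\!\!+}(\mathrm{fv}\,M-x)$, $\mathrm{fv}(\Pi[x:A]B)=\mathrm{fv}\,A\mathbin{+\!\!+}(\mathrm{fv}\,B-x)$, $\mathrm{fv}(M\cdot N)=\mathrm{fv}\,M\mathbin{+\!\!+}\mathrm{fv}\,N$, where $\mathbin{+\!\!+}$ is list concatenation and $xs-x$ deletes every occurrence of $x$ from $xs$. Fix a function $\chi':\mathrm{List}\,\mathbb N\to\mathbb N$ with $\chi'(ns)\notin ns$ for every list $ns$, and put $X'(xs)=\mathrm{decode}(\chi'(\mathrm{map}\ \mathrm{encode}\ xs))$. A substitution is any function $\sigma:\mathcal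 V\to\Lambda$; $\iota=v$ is the identity substitution; $(\sigma,x:=N)(y)=N$ if $y=x$ and $\sigma\,y$ otherwise. For a substitution $\sigma$ and a list $xs$ of variables, $X(\sigma,xs)=X'(\text{concatenation of the lists }\mathrm{fv}(\sigma\,y)\text{ for }y\in xs)$. The action $M\bullet\sigma$ is defined by structural recursion: $c\,k\bullet\sigma=c\,k$; $v\,x\bullet\sigma=\sigma\,x$; $(M\cdot N)\bullet\sigma=(M\bullet\sigma)\cdot(N\bullet\sigma)$; $(\lambda[x:A]M)\bullet\sigma=\lambda[y:A\bullet\sigma](M\bullet(\sigma,x:=v\,y))$ with $y=X(\sigma,\mathrm{fv}\,M-x)$; $(\Pi[x:A]B)\bullet\sigma=\Pi[y:A\bullet\sigma](B\bullet(\sigma,x:=v\,y))$ with $y=X(\sigma,\mathrm{fv}\,B-x)$. Unary substitution is $M[x:=N]=M\bullet(\iota,x:=N)$. $\alpha$-conversion $\sim_\alpha$ is the inductively defined relation with rules: $c\,k\sim_\alpha c\,k$; $v\,x\sim_\alpha v\,x$; $M\cdot N\sim_\alpha M'\cdot N'$ if $M\sim_\alpha M'$ and $N\sim_\alpha N'$; $\lambda[x:A]M\sim_\alpha\lambda[x':A']M'$ if $A\sim_\alpha A'$ and there is a variable $y$ with $y\notin\mathrm{fv}\,M-x$, $y\notin\mathrm{fv}\,M'-x'$ and $M[x:=v\,y]\equiv M'[x':=v\,y]$; and the same rule with $\Pi$ in place of $\lambda$. The relation $\sim_{\alpha s}$ is defined inductively by the same rules as $\sim_\alpha$ (with $\sim_{\alpha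 s}$ in place of $\sim_\alpha$ in the premises), except that in the rules for $\lambda$ and $\Pi$ the premise $M[x:=v\,y]\equiv M'[x':=v\,y]$ is replaced by $M[x:=v\,y]\sim_{\alpha s}M'[x':=v\,y]$ (the side conditions $y\notin\mathrm{fv}\,M-x$, $y\notin\mathrm{fv}\,M'-x'$ and $A\sim_{\alpha s}A'$ are kept). *)

From Stdlib Require Import List Arith.
Import ListNotations.
Set Implicit Arguments.

Record VarStruct := {
  V :> Type;
  V_eq_dec : forall x y : V, {x = y} + {x <> y};
  encode : V -> nat;
  decode : nat -> V;
  encode_decode : forall n, encode (decode n) = n;
  chi' : list nat -> nat;
  chi'_fresh : forall ns, ~ In (chi' ns) ns
}.

Section Terms.
Variable Vs : VarStruct.
Variable C : Type.

Inductive term : Type :=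
| tc : C -> term
| tv : Vs -> term
| tlam : Vs -> term -> term -> term
| tpi : Vs -> term -> term -> term
| tapp : term -> term -> term.

Definition rm (xs : list Vs) (x : Vs) : list Vs :=
  filter (fun y => if V_eq_dec Vs y x then false else true) xs.

Fixpoint fv (M : term) : list Vs :=
  match M with
  | tc _ => []
  | tv x => [x]
  | tlam x A M => fv A ++ rm (fv M) x
  | tpi x A B => fv A ++ rm (fv B) x
  | tapp M N => fv M ++ fv N
  end.

Definition X' (xs : list Vs) : Vs := decode Vs (chi' Vs (map (encode Vs) xs)).

Definition subst := Vs -> term.

Definition iota : subst := tv.

Definition upd (s : subst) (x : Vs) (N : term) : subst :=
  fun y => if V_eq_dec Vs y x then N else s y.

Definition Xs (s : subst) (xs : list Vs) : Vs :=
  X' (flat_map (fun y => fv (s y)) xs).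

Fixpoint act (M : term) (s : subst) : term :=
  match M with
  | tc k => tc k
  | tv x => s x
  | tapp M N => tapp (act M s) (act N s)
  | tlam x A M =>
      let y := Xs s (rm (fv M) x) in
      tlam y (act A s) (act M (upd s x (tv y)))
  | tpi x A B =>
      let y := Xs s (rm (fv B) x) in
      tpi y (act A s) (act B (upd s x (tv y)))
  end.

Definition usubst (M : term) (x : Vs) (N : term) : term := act M (upd iota x N).

Inductive alpha : term -> term -> Prop :=
| alpha_c : forall k, alpha (tc k) (tc k)
| alpha_v : forall x, alpha (tv x) (tv x)
| alpha_app : forall M N M' N', alpha M M' -> alpha N N' ->
    alpha (tapp M N) (tapp M' N')
| alpha_lam : forall x x' A A' M M' y, alpha A A' ->
    ~ In y (rm (fv M) x) -> ~ In y (rm (fv M') x') ->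
    usubst M x (tv y) = usubst M' x' (tv y) ->
    alpha (tlam x A M) (tlam x' A' M')
| alpha_pi : forall x x' A A' M M' y, alpha A A' ->
    ~ In y (rm (fv M) x) -> ~ In y (rm (fv M') x') ->
    usubst M x (tv y) = usubst M' x' (tv y) ->
    alpha (tpi x A M) (tpi x' A' M').

Inductive alpha_s : term -> term -> Prop :=
| alphas_c : forall k, alpha_s (tc k) (tc k)
| alphas_v : forall x, alpha_s (tv x) (tv x)
| alphas_app : forall M N M' N', alpha_s M M' -> alpha_s N N' ->
    alpha_s (tapp M N) (tapp M' N')
| alphas_lam : forall x x' A A' M M' y, alpha_s A A' ->
    ~ In y (rm (fv M) x) -> ~ In y (rm (fv M') x') ->
    alpha_s (usubst M x (tv y)) (usubst M' x' (tv y)) ->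
    alpha_s (tlam x A M) (tlam x' A' M')
| alphas_pi : forall x x' A A' M M' y, alpha_s A A' ->
    ~ In y (rm (fv M) x) -> ~ In y (rm (fv M') x') ->
    alpha_s (usubst M x (tv y)) (usubst M' x' (tv y)) ->
    alpha_s (tpi x A M) (tpi x' A' M').
End Terms.

(* Substitution [act] is invariant under [alpha_s]: by induction on [alpha_s],
   [M ~αs N] implies [M • σ ≡ N • σ] for every [σ].  For a binder this works
   because [λ[x:A]M • σ] depends on [M] only through [fv M - x] and the maps
   [w ↦ M • (σ, x := w)], and both are determined by the renamed body
   [M[x := y]] when [y] is fresh.  The theorem follows since the renamed
   bodies are fixed points of [• ι]: [M[x:=y] ≡ M[x:=y] • ι ≡ M'[x':=y] • ι ≡ M'[x':=y]]. *)

From Stdlib Require Import List.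

Lemma flat_map_ext_in {A B : Type} (f g : A -> list B) (l : list A) :
  (forall a, In a l -> f a = g a) -> flat_map f l = flat_map g l.
Proof.
  induction l as [|a l IHl]; intros Hfg; simpl; [reflexivity|].
  rewrite Hfg by (left; reflexivity).
  f_equal; apply IHl; intros b Hb; apply Hfg; right; exact Hb.
Qed.

Section Substitution.

Variables (Vs : VarStruct) (C : Type).

Lemma In_rm (l : list Vs) (x u : Vs) : In u (rm Vs l x) <-> In u l /\ u <> x.
Proof.
  unfold rm; rewrite filter_In.
  destruct (V_eq_dec Vs u x); intuition congruence.
Qed.

Lemma rm_app (l1 l2 : list Vs) (x : Vs) : rm Vs (l1 ++ l2) x = rm Vs l1 x ++ rm Vs l2 x.
Proof. apply filter_app. Qed.

Lemma rm_notin (l : list Vs) (x : Vs) : ~ In x l -> rm Vs l x = l.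
Proof.
  induction l as [|a l IHl]; intros Hx; [reflexivity|].
  unfold rm; simpl; destruct (V_eq_dec Vs a x) as [->|_].
  - exfalso; apply Hx; left; reflexivity.
  - f_equal; apply IHl; intro H; apply Hx; right; exact H.
Qed.

Lemma Xs_fresh (s : subst Vs C) (xs : list Vs) :
  ~ In (Xs s xs) (flat_map (fun y => fv (s y)) xs).
Proof.
  unfold Xs, X'; intro H.
  apply (chi'_fresh Vs (map (encode Vs) (flat_map (fun y => fv (s y)) xs))).
  rewrite <- (encode_decode Vs (chi' Vs _)).
  apply in_map, H.
Qed.

Lemma act_ext (M : term Vs C) (s t : subst Vs C) :
  (forall u, In u (fv M) -> s u = t u) -> act M s = act M t.
Proof.
  revert s t.
  induction M as [k|x|x A IHA M IHM|x A IHA M IHM|M IHM N IHN];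
    intros s t Hst; simpl in *; auto.
  3: rewrite (IHM s t), (IHN s t); auto; intros u Hu; apply Hst, in_or_app; auto.
  all: assert (Hy : Xs s (rm Vs (fv M) x) = Xs t (rm Vs (fv M) x))
         by (unfold Xs; f_equal; apply flat_map_ext_in; intros u Hu;
             rewrite Hst; auto; apply in_or_app; auto);
       rewrite Hy, (IHA s t) by (intros u Hu; apply Hst, in_or_app; auto);
       f_equal; apply IHM; intros u Hu; unfold upd;
       destruct (V_eq_dec Vs u x); auto;
       apply Hst, in_or_app; right; apply In_rm; auto.
Qed.

Lemma act_upd_fresh (M N : term Vs C) (t : subst Vs C) (y : Vs) :
  ~ In y (fv M) -> act M (upd t y N) = act M t.
Proof.
  intros Hy; apply act_ext; intros u Hu; unfold upd.
  destruct (V_eq_dec Vs u y) as [->|]; [contradiction|reflexivity].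
Qed.

Lemma rm_flat_map_upd (s : subst Vs C) (x y : Vs) (l : list Vs) :
  ~ In y (flat_map (fun u => fv (s u)) (rm Vs l x)) ->
  rm Vs (flat_map (fun u => fv (upd s x (tv Vs C y) u)) l) y
  = flat_map (fun u => fv (s u)) (rm Vs l x).
Proof.
  induction l as [|a l IHl]; intros Hy; simpl; [reflexivity|].
  rewrite rm_app; unfold upd at 1.
  unfold rm in Hy; unfold rm at 3; simpl in Hy |- *.
  destruct (V_eq_dec Vs a x).
  - unfold rm at 1; simpl; destruct (V_eq_dec Vs y y); [|congruence].
    apply IHl, Hy.
  - simpl in Hy; rewrite in_app_iff in Hy.
    rewrite rm_notin, IHl; auto.
Qed.

Lemma fv_act (M : term Vs C) (s : subst Vs C) :
  fv (act M s) = flat_map (fun u => fv (s u)) (fv M).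
Proof.
  revert s; induction M as [k|x|x A IHA M IHM|x A IHA M IHM|M IHM N IHN];
    intros s; simpl.
  - reflexivity.
  - rewrite app_nil_r; reflexivity.
  - rewrite flat_map_app, IHA, IHM, rm_flat_map_upd by apply Xs_fresh; reflexivity.
  - rewrite flat_map_app, IHA, IHM, rm_flat_map_upd by apply Xs_fresh; reflexivity.
  - rewrite flat_map_app, IHM, IHN; reflexivity.
Qed.

Lemma Xs_comp (s t : subst Vs C) (l : list Vs) :
  Xs t (flat_map (fun u => fv (s u)) l) = Xs (fun u => act (s u) t) l.
Proof.
  unfold Xs; f_equal.
  induction l as [|a l IHl]; simpl; [reflexivity|].
  rewrite flat_map_app, IHl, fv_act; reflexivity.
Qed.

Lemma act_comp (M : term Vs C) (s t : subst Vs C) :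
  act (act M s) t = act M (fun u => act (s u) t).
Proof.
  revert s t; induction M as [k|x|x A IHA M IHM|x A IHA M IHM|M IHM N IHN];
    intros s t; simpl; try reflexivity.
  3: rewrite IHM, IHN; reflexivity.
  all: set (y := Xs s (rm Vs (fv M) x));
       assert (Hy : ~ In y (flat_map (fun u => fv (s u)) (rm Vs (fv M) x)))
         by apply Xs_fresh;
       rewrite fv_act, (rm_flat_map_upd s x y _ Hy), Xs_comp, IHA, IHM;
       f_equal; apply act_ext; intros u Hu; unfold upd at 2;
       destruct (V_eq_dec Vs u x) as [->|Hux].
  1,3: unfold upd; simpl; destruct (V_eq_dec Vs x x); [|congruence];
       simpl; destruct (V_eq_dec Vs y y); [reflexivity|congruence].
  all: unfold upd; destruct (V_eq_dec Vs u x); [contradiction|];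
       apply act_upd_fresh; intro Hyu; apply Hy, in_flat_map;
       exists u; split; [apply In_rm|]; auto.
Qed.

Lemma flat_map_fv_iota (l : list Vs) : flat_map (fun u => fv (iota Vs C u)) l = l.
Proof.
  induction l as [|a l IHl]; simpl; [reflexivity|].
  f_equal; exact IHl.
Qed.

Lemma fv_act_iota (M : term Vs C) : fv (act M (iota Vs C)) = fv M.
Proof. rewrite fv_act; apply flat_map_fv_iota. Qed.

Lemma act_iota_usubst (M : term Vs C) (x y : Vs) :
  act (usubst M x (tv Vs C y)) (iota Vs C) = usubst M x (tv Vs C y).
Proof.
  unfold usubst; rewrite act_comp; apply act_ext; intros u _.
  unfold upd; destruct (V_eq_dec Vs u x); reflexivity.
Qed.

Lemma rm_fv_usubst (M : term Vs C) (x y : Vs) :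
  ~ In y (rm Vs (fv M) x) -> rm Vs (fv (usubst M x (tv Vs C y))) y = rm Vs (fv M) x.
Proof.
  intros Hy; unfold usubst.
  rewrite fv_act, rm_flat_map_upd; rewrite flat_map_fv_iota; auto.
Qed.

Lemma act_upd_usubst (M : term Vs C) (x y w : Vs) (s : subst Vs C) :
  ~ In y (rm Vs (fv M) x) ->
  act M (upd s x (tv Vs C w)) = act (usubst M x (tv Vs C y)) (upd s y (tv Vs C w)).
Proof.
  intros Hy; unfold usubst; rewrite act_comp; apply act_ext; intros u Hu.
  unfold upd; destruct (V_eq_dec Vs u x); simpl.
  - destruct (V_eq_dec Vs y y); [reflexivity|congruence].
  - destruct (V_eq_dec Vs u y) as [->|]; [|reflexivity].
    exfalso; apply Hy, In_rm; auto.
Qed.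

Lemma fv_eq_of_act_eq (M N : term Vs C) :
  (forall s, act M s = act N s) -> fv M = fv N.
Proof.
  intros HMN; rewrite <- fv_act_iota, HMN; apply fv_act_iota.
Qed.

Lemma alpha_s_act (M N : term Vs C) : alpha_s M N -> forall s, act M s = act N s.
Proof.
  induction 1 as [k|x|M N M' N' _ IHM _ IHN
                  |x x' A A' M M' y _ IHA HyM HyM' _ IHMM'
                  |x x' A A' M M' y _ IHA HyM HyM' _ IHMM'];
    intros s; simpl.
  1,2: reflexivity.
  1: rewrite IHM, IHN; reflexivity.
  all: rewrite <- (rm_fv_usubst M x y HyM), <- (rm_fv_usubst M' x' y HyM'),
         (fv_eq_of_act_eq _ _ IHMM'), IHA, (act_upd_usubst M x y _ s HyM),
         (act_upd_usubst M' x' y _ s HyM'), IHMM';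
       reflexivity.
Qed.

End Substitution.

Theorem mainTheorem8 (Vs : VarStruct) (C : Type) (M N : term Vs C) :
  alpha_s M N -> alpha M N.
Proof.
  induction 1 as [k|x|M N M' N' _ IHM _ IHN
                  |x x' A A' M M' y _ IHA HyM HyM' HMM' _
                  |x x' A A' M M' y _ IHA HyM HyM' HMM' _].
  - constructor.
  - constructor.
  - constructor; assumption.
  - apply alpha_lam with y; auto.
    rewrite <- act_iota_usubst, <- (act_iota_usubst _ _ M' x' y).
    apply alpha_s_act, HMM'.
  - apply alpha_pi with y; auto.
    rewrite <- act_iota_usubst, <- (act_iota_usubst _ _ M' x' y).
    apply alpha_s_act, HMM'.
Qed.
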